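(* Let $B$ be a Horn program, $E^+,E^-$ finite sets of ground atoms, and $H_1,H_2,H_3\in\mathcal{H}_{D,C}$ hypotheses with $H_3$ a generalization of $H_1$. If $S_{MDL}(H_2,B,E^+,E^-) - S_{MDL}(H_1,B,E^+,E^-) > fn(H_1,B,E^+) - (size(H_3)-size(H_1))$, then $S_{MDL}(H_2,B,E^+,E^-) > S_{MDL}(H_3,B,E^+,E^-)$.
   Context: A definite clause is a clause with exactly one positive literal. A hypothesis is a finite set of definite clauses; $\mathcal{H}_{D,C}$ denotes the hypothesis space of hypotheses consistent with a declaration bias $D$ and hypothesis constraints $C$ (only membership matters). $size(H)$ is the total number of literals in $H$. $B$ is background knowledge, $E^+$ positive and $E^-$ negative examples. For a hypothesis $H$: $tp(H,B,E^+)=|\{e\in E^+ : H\cup B\models e\}|$, $tn(H,B,E^-)=|\{e\in E^- : H\cup B\not\models e\}|$, $fn(H,B,E^+)=|E^+|-tp(H,B,E^+)$, and $S_{MDL}(H,B,E^+,E^-)=tp(H,B,E^+)+tn(H,B,E^-)-size(H)$. A clause $C_1$ subsumes a clause $C_2$ iff there is a substitution $\theta$ with $C_1\theta\subseteq C_2$. A clausal theory $T_1$ subsumes $T_2$ ($T_1\preceq T_2$) iff every clause of $T_2$ is subsumed by some clause of $T_1$. $T_1$ is a generalization of $T_2$ iff $T_1\preceq T_2$, and a specialization of $T_2$ iff $T_2\preceq T_1$. *)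

From Stdlib Require Import List ZArith ClassicalEpsilon.
Import ListNotations.
Open Scope Z_scope.

(* Terms: variables and function symbols (constants are 0-ary functions). *)
Inductive term : Type :=
| Var : nat -> term
| Fn : nat -> list term -> term.

Record atom : Type := mkAtom { pred_sym : nat; args : list term }.

(* A definite clause: exactly one positive literal (the head) and
   a list of negative literals (the body atoms). *)
Record clause : Type := mkClause { head : atom; body : list atom }.

(* A hypothesis is a finite set of definite clauses, represented as a
   duplicate-free list (see [is_hypothesis]). *)
Definition hypothesis := list clause.
Definition is_hypothesis (H : hypothesis) : Prop := NoDup H.

Fixpoint ground_term (t : term) : bool :=
  match t with
  | Var _ => false
  | Fn _ ts => forallb ground_term ts
  end.

Definition ground_atom (a : atom) : Prop := forallb ground_term (args a) = true.

Definition is_example_set (E : list atom) : Prop :=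
  NoDup E /\ Forall ground_atom E.

Definition subst := nat -> term.

Fixpoint subst_term (th : subst) (t : term) : term :=
  match t with
  | Var n => th n
  | Fn f ts => Fn f (map (subst_term th) ts)
  end.

Definition subst_atom (th : subst) (a : atom) : atom :=
  mkAtom (pred_sym a) (map (subst_term th) (args a)).

Inductive literal : Type := Pos : atom -> literal | Neg : atom -> literal.

Definition subst_lit (th : subst) (l : literal) : literal :=
  match l with Pos a => Pos (subst_atom th a) | Neg a => Neg (subst_atom th a) end.

Definition literals (c : clause) : list literal := Pos (head c) :: map Neg (body c).

Definition size (H : hypothesis) : Z :=
  Z.of_nat (fold_right (fun c acc => (length (literals c) + acc)%nat) 0%nat H).

Definition subsumes (c1 c2 : clause) : Prop :=
  exists th : subst, forall l, In l (map (subst_lit th) (literals c1)) -> In l (literals c2).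

Definition theory_subsumes (T1 T2 : list clause) : Prop :=
  forall c2, In c2 T2 -> exists c1, In c1 T1 /\ subsumes c1 c2.

Definition generalization (T1 T2 : list clause) : Prop := theory_subsumes T1 T2.
Definition specialization (T1 T2 : list clause) : Prop := theory_subsumes T2 T1.

Section Semantics.
Variables (D : Type) (fI : nat -> list D -> D) (pI : nat -> list D -> Prop).

Fixpoint eval (v : nat -> D) (t : term) : D :=
  match t with
  | Var n => v n
  | Fn f ts => fI f (map (eval v) ts)
  end.

Definition holds (v : nat -> D) (a : atom) : Prop := pI (pred_sym a) (map (eval v) (args a)).

Definition sat_clause (c : clause) : Prop :=
  forall v : nat -> D, (forall b, In b (body c) -> holds v b) -> holds v (head c).
End Semantics.

(* Logical consequence: P |= a (a a ground atom, so its truth does not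
   depend on the assignment). *)
Definition entails (P : list clause) (a : atom) : Prop :=
  forall (D : Type) (fI : nat -> list D -> D) (pI : nat -> list D -> Prop),
    (forall c, In c P -> sat_clause D fI pI c) ->
    forall v : nat -> D, holds D fI pI v a.

Definition entailsb (P : list clause) (a : atom) : bool :=
  if excluded_middle_informative (entails P a) then true else false.

Definition tp (H B : list clause) (Ep : list atom) : Z :=
  Z.of_nat (length (filter (fun e => entailsb (H ++ B) e) Ep)).

Definition tn (H B : list clause) (En : list atom) : Z :=
  Z.of_nat (length (filter (fun e => negb (entailsb (H ++ B) e)) En)).

Definition fn (H B : list clause) (Ep : list atom) : Z :=
  Z.of_nat (length Ep) - tp H B Ep.

Definition S_MDL (H B : list clause) (Ep En : list atom) : Z :=
  tp H B Ep + tn H B En - size H.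

(* A generalization H3 of H1 subsumes every clause of H1, so every model of H3 ∪ B is a
   model of H1 ∪ B and H3 ∪ B entails everything H1 ∪ B entails. Hence H3 loses no
   true negatives relative to H1 (tn H3 <= tn H1), and it can gain at most the fn H1
   positives that H1 misses (tp H3 <= |E+| = tp H1 + fn H1). Therefore
   S_MDL H3 <= S_MDL H1 + fn H1 - (size H3 - size H1), and the hypothesis on H2 makes
   S_MDL H2 exceed this bound. *)

From Pilot Require Import Defs.
From Stdlib Require Import List ZArith Lia.
Open Scope Z_scope.

Section Structure.
Variables (D : Type) (fI : nat -> list D -> D) (pI : nat -> list D -> Prop).

Fixpoint eval_subst_term (v : nat -> D) (th : subst) (t : term) {struct t} :
  eval D fI v (subst_term th t) = eval D fI (fun n => eval D fI v (th n)) t.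
Proof.
  destruct t as [n | f ts]; simpl; [reflexivity |].
  f_equal; rewrite map_map.
  induction ts as [| t ts IH]; simpl; [reflexivity |].
  f_equal; [apply eval_subst_term | exact IH].
Qed.

Lemma holds_subst_atom (v : nat -> D) (th : subst) (a : atom) :
  holds D fI pI v (subst_atom th a) <-> holds D fI pI (fun n => eval D fI v (th n)) a.
Proof.
  unfold holds, subst_atom; simpl; rewrite map_map.
  rewrite (map_ext _ _ (eval_subst_term v th)); reflexivity.
Qed.

Lemma sat_clause_subsumes (c1 c2 : clause) :
  subsumes c1 c2 -> sat_clause D fI pI c1 -> sat_clause D fI pI c2.
Proof.
  intros [th Hsub] Hc1 v Hbody.
  assert (Hhead : subst_atom th (Defs.head c1) = Defs.head c2).
  { destruct (Hsub (Pos (subst_atom th (Defs.head c1)))) as [Heq | Hneg]; [now left | |].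
    - now injection Heq.
    - apply in_map_iff in Hneg as [? [? _]]; discriminate. }
  rewrite <- Hhead; apply holds_subst_atom, Hc1.
  intros b Hb; apply holds_subst_atom, Hbody.
  destruct (Hsub (Neg (subst_atom th b))) as [Heq | Hneg].
  - right; rewrite map_map; apply in_map_iff; now exists b.
  - discriminate.
  - apply in_map_iff in Hneg as [b' [Heq Hb']]; injection Heq as ->; exact Hb'.
Qed.

Lemma sat_theory_subsumes (T1 T2 : list clause) :
  theory_subsumes T1 T2 ->
  (forall c, In c T1 -> sat_clause D fI pI c) -> forall c, In c T2 -> sat_clause D fI pI c.
Proof.
  intros Hsub HT1 c Hc.
  destruct (Hsub c Hc) as [c1 [Hc1 Hs]].
  exact (sat_clause_subsumes c1 c Hs (HT1 c1 Hc1)).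
Qed.

End Structure.

Lemma entails_generalization (H1 H3 B : list clause) (a : atom) :
  generalization H3 H1 -> entails (H1 ++ B) a -> entails (H3 ++ B) a.
Proof.
  intros Hgen Hent D fI pI Hsat; apply Hent.
  intros c Hc; apply in_app_or in Hc as [Hc | Hc].
  - refine (sat_theory_subsumes D fI pI H3 H1 Hgen _ c Hc).
    intros c3 Hc3; apply Hsat, in_or_app; now left.
  - apply Hsat, in_or_app; now right.
Qed.

Lemma entailsb_true (P : list clause) (a : atom) : entailsb P a = true <-> entails P a.
Proof.
  unfold entailsb; destruct (ClassicalEpsilon.excluded_middle_informative (entails P a)); split; easy.
Qed.

Lemma filter_length_impl {A : Type} (f g : A -> bool) (l : list A) :
  (forall x, f x = true -> g x = true) ->
  (length (filter f l) <= length (filter g l))%nat.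
Proof.
  intros Hfg; induction l as [| x l IH]; simpl; [lia |].
  destruct (f x) eqn:Hf; [rewrite (Hfg x Hf); simpl; lia |].
  destruct (g x); simpl; lia.
Qed.

Lemma tn_generalization_le (H1 H3 B : list clause) (En : list atom) :
  generalization H3 H1 -> tn H3 B En <= tn H1 B En.
Proof.
  intros Hgen; unfold tn; apply Nat2Z.inj_le, filter_length_impl; intros e.
  rewrite !Bool.negb_true_iff, <- !Bool.not_true_iff_false, !entailsb_true.
  intros Hn3 Hent1; exact (Hn3 (entails_generalization H1 H3 B e Hgen Hent1)).
Qed.

Lemma tp_le_length (H B : list clause) (Ep : list atom) : tp H B Ep <= Z.of_nat (length Ep).
Proof. unfold tp; apply Nat2Z.inj_le, filter_length_le. Qed.

Lemma S_MDL_generalization_le (H1 H3 B : list clause) (Ep En : list atom) :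
  generalization H3 H1 ->
  S_MDL H3 B Ep En <= S_MDL H1 B Ep En + fn H1 B Ep - (size H3 - size H1).
Proof.
  intros Hgen.
  pose proof (tn_generalization_le H1 H3 B En Hgen).
  pose proof (tp_le_length H3 B Ep).
  unfold S_MDL, fn; lia.
Qed.

Theorem proposition4p10 (HS : hypothesis -> Prop) (B : list clause)
  (Ep En : list atom) (H1 H2 H3 : hypothesis) :
  is_example_set Ep -> is_example_set En ->
  is_hypothesis H1 -> is_hypothesis H2 -> is_hypothesis H3 ->
  HS H1 -> HS H2 -> HS H3 ->
  generalization H3 H1 ->
  S_MDL H2 B Ep En - S_MDL H1 B Ep En > fn H1 B Ep - (size H3 - size H1) ->
  S_MDL H2 B Ep En > S_MDL H3 B Ep En.
Proof.
  intros _ _ _ _ _ _ _ _ Hgen Hgap.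
  pose proof (S_MDL_generalization_le H1 H3 B Ep En Hgen).
  lia.
Qed.
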